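(* Let $\mathsf X$ be a metric space and $Q$ a transition kernel on $\mathsf X$. Then: (a) if $Q$ is strongly irreducible, then $Q$ is weakly irreducible; (b) if $Q$ is weakly irreducible, then $Q$ is open set irreducible.
   Context: $\mathscr B$ is the Borel $\sigma$-algebra of $\mathsf X$. A transition kernel on $\mathsf X$ is a map $Q:\mathsf X\times\mathscr B\to[0,1]$ that is Borel measurable in its first argument and a probability measure in its second; $Q^n$ denotes the $n$-step kernel, $Q^n(x,B)=(Q^n\mathbb 1_B)(x)$, where $Q$ also denotes the Markov operator $(Qf)(x)=\int f(x')Q(x,\mathrm dx')$ on $b\mathsf X$, the Banach space of bounded Borel measurable real functions on $\mathsf X$ with the supremum norm and pointwise order. $b\mathsf X_+$ denotes its nonnegative elements, $b\mathsf X'$ its dual, and $b\mathsf X'_+$ the positive functionals. An ideal of $b\mathsf X$ is a linear subspace $I$ with $f\in I$, $|g|\le|f|\Rightarrow g\in I$; it is invariant for $K$ if $KI\subset I$. A positive linear operator on $b\mathsf X$ is irreducible if its only invariant ideals are $\{0\}$ and $b\mathsf X$; equivalently (a standard fact), for every nonzero $f\in b\mathsf X_+$ and nonzero $\mu\in b\mathsf X'_+$ there is $m\in\mathbb N=\{1,2,\dots\}$ with $\mu(K^mf)>0$. $Q$ is strongly irreducible if its Markov operator is irreducible in this sense. $Q$ is weakly irreducible if there is a measure $\pi$ on $(\mathsf X,\mathscr B)$ such that $\pi(G)>0$ for every nonempty open $G$, and $Q$ is $\pi$-irreducible: for every $x\in\mathsf X$ and every $B\in\mathscr B$ with $\pi(B)>0$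 there is $n\in\mathbb N$ with $Q^n(x,B)>0$. A point $y$ is $Q$-reachable from $x$ if for each open neighborhood $G$ of $y$ there is $n\in\mathbb N$ with $Q^n(x,G)>0$; $Q$ is open set irreducible if every $y$ is $Q$-reachable from every $x$. *)

From HB Require Import structures.
From mathcomp Require Import all_boot all_order all_algebra.
From mathcomp Require Import all_classical all_reals all_analysis.

Set Implicit Arguments.
Unset Strict Implicit.
Unset Printing Implicit Defensive.

Import Order.TTheory GRing.Theory Num.Theory.

Local Open Scope classical_set_scope.
Local Open Scope ring_scope.

(* A metric space (real-valued distance), together with a distinguished point:
   MathComp-Analysis measurable types are required to be pointed (nonempty). *)
#[short(type="pointedMetricType")]
HB.structure Definition PointedMetric (K : numDomainType) :=
  {T of Pointed T & Metric K T}.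

Definition borel (R : realType) (X : pointedMetricType R) :=
  g_sigma_algebraType (@open X).

Section markov.
Context (R : realType) (X : pointedMetricType R).
Local Notation BX := (borel X).

Definition bX (f : BX -> R) : Prop :=
  measurable_fun [set: BX] f /\ exists M : R, forall x, `|f x| <= M.

Definition markov_op (Q : R.-pker BX ~> BX) (f : BX -> R) : BX -> R :=
  fun x => fine (\int[Q x]_y (f y)%:E)%E.

Definition kpow (Q : R.-pker BX ~> BX) (n : nat) (x : BX) (B : set BX) : R :=
  iter n (markov_op Q) (\1_B) x.

Definition ideal (I : set (BX -> R)) : Prop :=
  [/\ I `<=` bX,
      I (cst 0),
      (forall f g, I f -> I g -> I (f \+ g)),
      (forall (a : R) f, I f -> I (fun x => a * f x)) &
      (forall f g, I f -> bX g -> (forall x, `|g x| <= `|f x|) -> I g)].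

Definition invariant (K : (BX -> R) -> (BX -> R)) (I : set (BX -> R)) : Prop :=
  forall f, I f -> I (K f).

Definition irreducible_op (K : (BX -> R) -> (BX -> R)) : Prop :=
  forall I, ideal I -> invariant K I -> I = [set cst 0] \/ I = bX.

Definition strongly_irreducible (Q : R.-pker BX ~> BX) : Prop :=
  irreducible_op (markov_op Q).

Definition weakly_irreducible (Q : R.-pker BX ~> BX) : Prop :=
  exists pi : {measure set BX -> \bar R},
    (forall G : set X, open G -> G !=set0 -> (0 < pi G)%E) /\
    (forall (x : BX) (B : set BX), measurable B -> (0 < pi B)%E ->
       exists n : nat, (0 < n)%N /\ 0 < kpow Q n x B).

Definition reachable (Q : R.-pker BX ~> BX) (x y : X) : Prop :=
  forall G : set X, open G -> G y ->
    exists n : nat, (0 < n)%N /\ 0 < kpow Q n x G.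

Definition open_set_irreducible (Q : R.-pker BX ~> BX) : Prop :=
  forall x y : X, reachable Q x y.

End markov.

From Pilot Require Import Defs.
From HB Require Import structures.
From mathcomp Require Import all_boot all_order all_algebra.
From mathcomp Require Import all_classical all_reals all_analysis.
From mathcomp Require Import finmap measurable_realfun.

(* (a) Take pi to be the counting measure; it then suffices that every nonempty Borel
   set B is reached from every state.  The set of states from which B is reached in
   some n >= 0 steps is absorbing: a nonnegative function with zero Q x-integral
   vanishes Q x-a.e., so a state outside it puts Q-mass 0 on it.  Hence the functions
   of bX vanishing off that set form an invariant ideal containing 1_B, which by
   irreducibility is all of bX, so the set is everything.  A state reaching B in no
   n >= 1 steps would then put Q-mass 0 on the whole space.
   (b) Every open neighbourhood of y is Borel and has positive pi-measure. *)

Set Implicit Arguments.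
Unset Strict Implicit.
Unset Printing Implicit Defensive.

Import Order.TTheory GRing.Theory Num.Theory.
Local Open Scope classical_set_scope.
Local Open Scope ring_scope.

Lemma counting_gt0 (T : choiceType) (R : realType) (A : set T) :
  A !=set0 -> (0 < @counting T R A)%E.
Proof.
move=> [a Aa]; rewrite /counting; case: asboolP => [finA|_]; last exact: ltry.
rewrite lte_fin ltr0n cardfs_gt0; apply/eqP => A0.
by have := in_fset_set finA a; rewrite A0 inE mem_set.
Qed.

Section integral_bounds.
Context d (T : measurableType d) (R : realType) (mu : {measure set T -> \bar R}).

Lemma abse_integral_le_bound (f : T -> R) (M : R) :
  measurable_fun [set: T] f -> (forall x, `|f x| <= M) ->
  (`|\int[mu]_x (f x)%:E| <= M%:E * mu [set: T])%E.
Proof.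
move=> mf fM; have mF : measurable_fun [set: T] (EFin \o f) by exact/measurable_EFinP.
rewrite (le_trans (le_abse_integral _ _ mF)) //.
apply: integral_le_bound => //; first by rewrite lee_fin (le_trans _ (fM point)).
by apply: aeW => x _; rewrite lee_fin.
Qed.

Lemma ge0_integral_eq0_negligible (f : T -> R) :
  measurable_fun [set: T] f -> (forall x, 0 <= f x) ->
  (\int[mu]_x (f x)%:E = 0)%E -> mu.-negligible [set x | 0 < f x].
Proof.
move=> mf f0 if0; have mF : measurable_fun [set: T] (EFin \o f) by exact/measurable_EFinP.
have : (\int[mu]_x `|(f x)%:E| = 0)%E.
  by rewrite -if0; apply: eq_integral => x _; rewrite gee0_abs // lee_fin.
move/(ae_eq_integral_abs mu measurableT mF) => [N [mN N0 fN]].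
exists N; split => // x /= fx; apply: fN => /(_ I) [] /eqP.
by rewrite gt_eqF.
Qed.

End integral_bounds.

Section markov_operator.
Context (R : realType) (X : pointedMetricType R) (Q : R.-pker borel X ~> borel X).
Local Notation BX := (borel X).
Implicit Types (f : BX -> R) (x : BX) (B : set BX).

Lemma bX_cst (c : R) : bX (cst c : BX -> R).
Proof. by split; [exact: measurable_cst | exists `|c|]. Qed.

Lemma bX_indic B : measurable B -> bX (\1_B).
Proof.
move=> mB; split; first exact: measurable_indic.
by exists 1 => x; rewrite indicE; case: (x \in B); rewrite ?normr1 ?normr0.
Qed.

Lemma abse_kernel_integral_le f M x :
  measurable_fun [set: BX] f -> (forall y, `|f y| <= M) ->
  (`|\int[Q x]_y (f y)%:E| <= M%:E)%E.
Proof.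
move=> mf fM; rewrite -[leRHS]mule1 -(prob_kernel (s:=Q) x).
exact: abse_integral_le_bound.
Qed.

Lemma kernel_integral_fin_num f x : bX f -> (\int[Q x]_y (f y)%:E)%E \is a fin_num.
Proof.
move=> [mf [M fM]]; rewrite -abse_fin_num ge0_fin_numE //.
exact: (le_lt_trans (abse_kernel_integral_le x mf fM) (ltry M)).
Qed.

Lemma markov_op_ge0 f x : (forall y, 0 <= f y) -> 0 <= markov_op Q f x.
Proof. by move=> f0; apply/fine_ge0/integral_ge0 => y _; rewrite lee_fin. Qed.

Lemma measurable_markov_op f :
  measurable_fun [set: BX] f -> measurable_fun [set: BX] (markov_op Q f).
Proof.
move=> mf; have mF : measurable_fun [set: BX] (EFin \o f) by exact/measurable_EFinP.
apply: (measurableT_comp (fine_measurable _)) => //.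
rewrite (_ : (fun x => _) = ((fun x => \int[Q x]_y (EFin \o f)^\+ y) \-
                            (fun x => \int[Q x]_y (EFin \o f)^\- y))%E); last first.
  by apply/funext => x; rewrite integralE.
by apply: emeasurable_funB; apply: measurable_fun_integral_kernel;
  [exact: measurable_kernel | exact: funepos_ge0 | exact: measurable_funepos
  |exact: measurable_kernel | exact: funeneg_ge0 | exact: measurable_funeneg].
Qed.

Lemma markov_op_bX f : bX f -> bX (markov_op Q f).
Proof.
move=> bf; have [mf [M fM]] := bf; split; first exact: measurable_markov_op.
exists M => x; have := abse_kernel_integral_le x mf fM.
by rewrite /markov_op; case: (\int[Q x]_y _)%E.
Qed.

Lemma markov_op_eq0_negligible f x : bX f -> (forall y, 0 <= f y) ->
  markov_op Q f x = 0 -> (Q x).-negligible [set y | 0 < f y].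
Proof.
move=> bf f0 Qf0; apply: ge0_integral_eq0_negligible => //; first exact: bf.1.
by rewrite -[LHS]fineK ?kernel_integral_fin_num // -/(markov_op Q f x) Qf0.
Qed.

Lemma kpowS n x B : kpow Q n.+1 x B = markov_op Q (kpow Q n ^~ B) x.
Proof. by rewrite /kpow iterS. Qed.

Lemma kpow_bX n B : measurable B -> bX (kpow Q n ^~ B).
Proof.
move=> mB; elim: n => [|n IHn]; first exact: bX_indic.
exact: markov_op_bX IHn.
Qed.

Lemma kpow_ge0 n x B : 0 <= kpow Q n x B.
Proof.
elim: n x => [x|n IHn x]; first by rewrite /kpow /= indicE; case: (x \in B).
by rewrite kpowS; exact: markov_op_ge0.
Qed.

Definition reach_set B : set BX := [set y | exists n, 0 < kpow Q n y B].

Lemma reach_setE B : reach_set B = \bigcup_n [set y | 0 < kpow Q n y B].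
Proof. by apply/seteqP; split => y [n]; exists n. Qed.

Lemma measurable_reach_set B : measurable B -> measurable (reach_set B).
Proof.
move=> mB; rewrite reach_setE; apply: bigcupT_measurable => n.
rewrite -[X in measurable X]setTI (_ : [set y | _] = kpow Q n ^~ B @^-1` `]0, +oo[).
  by apply: (kpow_bX n mB).1 => //; exact: measurable_itv.
by apply/seteqP; split => y /=; rewrite in_itv /= andbT.
Qed.

Lemma reach_set_null x B : measurable B -> (forall n, kpow Q n.+1 x B = 0) ->
  Q x (reach_set B) = 0%E.
Proof.
move=> mB kpow0; apply/negligibleP; first exact: measurable_reach_set.
rewrite reach_setE; apply: negligible_bigcup => n.
apply: markov_op_eq0_negligible; first exact: kpow_bX.
- by move=> y; exact: kpow_ge0.
- by rewrite -kpowS.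
Qed.

Definition vanishing_off (A : set BX) : set (BX -> R) :=
  [set f | bX f /\ forall y, ~ A y -> f y = 0].

Lemma ideal_vanishing_off A : ideal (vanishing_off A).
Proof.
split.
- by move=> f [].
- by split => //; exact: bX_cst.
- move=> f g [[mf [M fM]] f0] [[mg [N gN]] g0]; split; [split|].
  + exact: measurable_funD.
  + by exists (M + N) => x; rewrite (le_trans (ler_normD _ _)) ?lerD.
  + by move=> y Ay; rewrite /= f0 // g0 // addr0.
- move=> a f [[mf [M fM]] f0]; split; [split|].
  + exact: measurable_funM.
  + by exists (`|a| * M) => x; rewrite normrM ler_wpM2l.
  + by move=> y Ay; rewrite f0 // mulr0.
- move=> f g [_ f0] bg gf; split => // y Ay.
  by have := gf y; rewrite f0 // normr0 normr_le0 => /eqP.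
Qed.

Lemma invariant_vanishing_off A : measurable A ->
  (forall x, ~ A x -> Q x A = 0%E) -> Defs.invariant (markov_op Q) (vanishing_off A).
Proof.
move=> mA closedA f [bf f0]; split; first exact: markov_op_bX.
move=> x Ax; rewrite /markov_op (ae_eq_integral (cst 0%E)) ?integral0 //.
- by apply/measurable_EFinP; exact: bf.1.
- exists A; split; [by [] | exact: closedA | move=> y /= /not_implyP [_]].
  by apply: contra_notP => /f0 ->.
Qed.

Lemma strongly_irreducible_absorbing A : strongly_irreducible Q ->
  measurable A -> A !=set0 -> (forall x, ~ A x -> Q x A = 0%E) -> A = setT.
Proof.
move=> irrQ mA [a Aa] closedA.
have [supp0|suppT] := irrQ _ (ideal_vanishing_off A) (invariant_vanishing_off mA closedA).
- have : vanishing_off A (\1_A).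
    by split=> [|y Ay]; [exact: bX_indic | rewrite indicE memNset].
  rewrite supp0 => /(congr1 (fun f => f a)) /eqP.
  by rewrite indicE mem_set // oner_eq0.
- have : vanishing_off A (cst 1) by rewrite suppT; exact: bX_cst.
  move=> [_ one0]; apply/seteqP; split => // y _.
  by apply: contrapT => /one0 /eqP; rewrite oner_eq0.
Qed.

Lemma strongly_irreducible_reach x B : strongly_irreducible Q ->
  measurable B -> B !=set0 -> exists n, (0 < n)%N /\ 0 < kpow Q n x B.
Proof.
move=> irrQ mB [b Bb]; apply: contrapT => noreach.
have kpow_eq0 y n : ~ 0 < kpow Q n y B -> kpow Q n y B = 0.
  by move/negP; rewrite -leNgt => kpow_le0; apply/eqP; rewrite eq_le kpow_le0 kpow_ge0.
have reach_setT : reach_set B = setT.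
  apply: strongly_irreducible_absorbing => //; first exact: measurable_reach_set.
  - by exists b, 0%N; rewrite /kpow /= indicE mem_set // ltr01.
  - move=> y noreach_y; apply: reach_set_null => // n.
    by apply: kpow_eq0 => kpow_gt0; apply: noreach_y; exists n.+1.
suff /eqP : Q x (reach_set B) = 0%E by rewrite reach_setT prob_kernel onee_eq0.
apply: reach_set_null => // n.
by apply: kpow_eq0 => kpow_gt0; apply: noreach; exists n.+1.
Qed.

End markov_operator.

Theorem lemma4p3 (R : realType) (X : pointedMetricType R)
    (Q : R.-pker borel X ~> borel X) :
  (strongly_irreducible Q -> weakly_irreducible Q) /\
  (weakly_irreducible Q -> open_set_irreducible Q).
Proof.
split.
- move=> irrQ; exists counting; split; first by move=> G _; exact: counting_gt0.
  move=> x B mB B_gt0; apply: strongly_irreducible_reach => //.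
  by apply/set0P; apply: contraTneq B_gt0 => ->; rewrite measure0 ltxx.
- move=> [pi [pi_open pi_irr]] x y G oG Gy.
  by apply: pi_irr; [exact: sub_sigma_algebra | apply: pi_open => //; exists y].
Qed.
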